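(* Let $\mathcal{I}\in\mathrm{Ins}(\Omega,\mathcal{H})$ and $\mathcal{J}\in\mathrm{Ins}(\Lambda,\mathcal{H},\mathcal{V})$ be instruments. Then: if $\mathcal{I}$ does not disturb $\mathcal{J}$, then $\mathsf{A}^{\mathcal{I}}$ does not disturb $\mathcal{J}$; if $\mathsf{A}^{\mathcal{I}}$ does not disturb $\mathcal{J}$, then $\mathsf{A}^{\mathcal{I}}$ and $\mathcal{J}$ are compatible; and if $\mathsf{A}^{\mathcal{I}}$ and $\mathcal{J}$ are compatible, then $\mathsf{A}^{\mathcal{I}}$ is compatible with $\Phi^{\mathcal{J}}$ and $\mathsf{A}^{\mathcal{I}}$ is compatible with $\mathsf{A}^{\mathcal{J}}$.
   Context: All Hilbert spaces are finite-dimensional and complex, and all outcome sets are finite. A POVM $\mathsf{A}\in\mathcal{O}(\Omega,\mathcal{H})$ is a map $x\mapsto \mathsf{A}(x)$ from $\Omega$ to positive operators on $\mathcal{H}$ with $\sum_x \mathsf{A}(x)=I$. An instrument $\mathcal{I}\in\mathrm{Ins}(\Omega,\mathcal{H},\mathcal{K})$ is a family $(\mathcal{I}_x)_{x\in\Omega}$ of completely positive trace-nonincreasing linear maps $\mathcal{L}(\mathcal{H})\to\mathcal{L}(\mathcal{K})$ such that $\Phi^{\mathcal{I}}:=\sum_x\mathcal{I}_x$ is trace preserving (the induced channel); its induced POVM $\mathsf{A}^{\mathcal{I}}$ is defined by $\mathrm{tr}[\mathsf{A}^{\mathcal{I}}(x)\varrho]=\mathrm{tr}[\mathcal{I}_x(\varrho)]$;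 $\mathrm{Ins}(\Omega,\mathcal{H}):=\mathrm{Ins}(\Omega,\mathcal{H},\mathcal{H})$. An instrument $\mathcal{I}\in\mathrm{Ins}(\Omega,\mathcal{H})$ does not disturb $\mathcal{J}\in\mathrm{Ins}(\Lambda,\mathcal{H},\mathcal{V})$ if $\mathcal{J}_y\circ\Phi^{\mathcal{I}}=\mathcal{J}_y$ for all $y$. A POVM $\mathsf{A}\in\mathcal{O}(\Omega,\mathcal{H})$ does not disturb $\mathcal{J}$ if some $\mathcal{I}'\in\mathrm{Ins}(\Omega,\mathcal{H})$ with $\mathsf{A}^{\mathcal{I}'}=\mathsf{A}$ does not disturb $\mathcal{J}$. Two instruments $\mathcal{I}\in\mathrm{Ins}(\Omega,\mathcal{H},\mathcal{K})$, $\mathcal{J}\in\mathrm{Ins}(\Lambda,\mathcal{H},\mathcal{V})$ are compatible if there is $\mathcal{G}\in\mathrm{Ins}(\Omega\times\Lambda,\mathcal{H},\mathcal{K}\otimes\mathcal{V})$ with $\sum_{x}\mathrm{tr}_{\mathcal{K}}[\mathcal{G}_{(x,y)}(\varrho)]=\mathcal{J}_y(\varrho)$ for all $y$ and $\sum_y\mathrm{tr}_{\mathcal{V}}[\mathcal{G}_{(x,y)}(\varrho)]=\mathcal{I}_x(\varrho)$ for all $x$, for all states $\varrho$. A POVM $\mathsf{A}\in\mathcal{O}(\Omega,\mathcal{H})$ is identified with the instrument in $\mathrm{Ins}(\Omega,\mathcal{H},\mathbb{C})$ given by $\varrho\mapsto\mathrm{tr}[\mathsf{A}(x)\varrho]$,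 and a channel with a one-outcome instrument; compatibility involving POVMs or channels is defined through these identifications. *)

(* Finite-dimensional complex Hilbert spaces are modelled as
   C^n with C an arbitrary numClosedFieldType (e.g. algC, or R[i] for R rcf);
   operators on C^n are matrices 'M[C]_n. *)
From HB Require Import structures.
From mathcomp Require Import all_boot all_order all_algebra.
Set Implicit Arguments. Unset Strict Implicit. Unset Printing Implicit Defensive.
Import Order.TTheory GRing.Theory Num.Theory.
Local Open Scope ring_scope.

Section QDefs.
Variable C : numClosedFieldType.

Definition adjmx (k l : nat) (A : 'M[C]_(k, l)) : 'M[C]_(l, k) :=
  (map_mx Num.conj A)^T.

Definition psd (N : nat) (A : 'M[C]_N) : Prop :=
  forall v : 'cV[C]_N, 0 <= (adjmx v *m A *m v) 0 0.

Definition state (n : nat) (rho : 'M[C]_n) : Prop := psd rho /\ \tr rho = 1.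

Definition is_linear (n m : nat) (f : 'M[C]_n -> 'M[C]_m) : Prop :=
  forall (a : C) (X Y : 'M[C]_n), f (a *: X + Y) = a *: f X + f Y.

(* The element of L(C^k (x) C^n) = 'M_(k*n) given by its k x k blocks
   B a b : 'M_n (basis e_a (x) e_i is indexed by mxvec_index a i). *)
Definition blockmx (k n : nat) (B : 'I_k -> 'I_k -> 'M[C]_n) : 'M[C]_(k * n) :=
  \sum_(a < k) \sum_(b < k) \sum_(i < n) \sum_(j < n)
     B a b i j *: delta_mx (mxvec_index a i) (mxvec_index b j).

(* complete positivity: id_k (x) f is positive for every ancilla dimension k *)
Definition completely_positive (n m : nat) (f : 'M[C]_n -> 'M[C]_m) : Prop :=
  forall (k : nat) (B : 'I_k -> 'I_k -> 'M[C]_n),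
    psd (blockmx B) -> psd (blockmx (fun a b => f (B a b))).

Definition trace_nonincreasing (n m : nat) (f : 'M[C]_n -> 'M[C]_m) : Prop :=
  forall rho : 'M[C]_n, psd rho -> \tr (f rho) <= \tr rho.

Definition trace_preserving (n m : nat) (f : 'M[C]_n -> 'M[C]_m) : Prop :=
  forall X : 'M[C]_n, \tr (f X) = \tr X.

Definition induced_channel (O : finType) (n m : nat)
  (I : O -> 'M[C]_n -> 'M[C]_m) : 'M[C]_n -> 'M[C]_m :=
  fun X => \sum_(x : O) I x X.

Definition instrument (O : finType) (n m : nat)
  (I : O -> 'M[C]_n -> 'M[C]_m) : Prop :=
  (forall x, is_linear (I x)) /\
  (forall x, completely_positive (I x)) /\
  (forall x, trace_nonincreasing (I x)) /\
  trace_preserving (induced_channel I).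

Definition induces_povm (O : finType) (n m : nat)
  (I : O -> 'M[C]_n -> 'M[C]_m) (A : O -> 'M[C]_n) : Prop :=
  forall (x : O) (rho : 'M[C]_n), state rho -> \tr (A x *m rho) = \tr (I x rho).

(* a POVM identified with an instrument into L(C) = 'M_1 *)
Definition povm_ins (O : finType) (n : nat) (A : O -> 'M[C]_n)
  : O -> 'M[C]_n -> 'M[C]_1 :=
  fun x rho => (\tr (A x *m rho))%:M.

Definition chan_ins (n m : nat) (Phi : 'M[C]_n -> 'M[C]_m)
  : unit -> 'M[C]_n -> 'M[C]_m := fun _ => Phi.

Definition ins_nondisturb (O L : finType) (n p : nat)
  (I : O -> 'M[C]_n -> 'M[C]_n) (J : L -> 'M[C]_n -> 'M[C]_p) : Prop :=
  forall (y : L) (X : 'M[C]_n), J y (induced_channel I X) = J y X.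

Definition povm_nondisturb (O L : finType) (n p : nat)
  (A : O -> 'M[C]_n) (J : L -> 'M[C]_n -> 'M[C]_p) : Prop :=
  exists I' : O -> 'M[C]_n -> 'M[C]_n,
    [/\ instrument I', induces_povm I' A & ins_nondisturb I' J].

(* partial traces on C^m (x) C^p = C^(m*p) (basis e_a (x) e_b ~ mxvec_index a b) *)
Definition ptrace1 (m p : nat) (X : 'M[C]_(m * p)) : 'M[C]_p :=
  \matrix_(b, b') \sum_(a < m) X (mxvec_index a b) (mxvec_index a b').
Definition ptrace2 (m p : nat) (X : 'M[C]_(m * p)) : 'M[C]_m :=
  \matrix_(a, a') \sum_(b < p) X (mxvec_index a b) (mxvec_index a' b).

Definition compatible (O L : finType) (n m p : nat)
  (I : O -> 'M[C]_n -> 'M[C]_m) (J : L -> 'M[C]_n -> 'M[C]_p) : Prop :=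
  exists G : O * L -> 'M[C]_n -> 'M[C]_(m * p),
    instrument G /\
    forall rho : 'M[C]_n, state rho ->
      (forall y : L, \sum_(x : O) ptrace1 (G (x, y) rho) = J y rho) /\
      (forall x : O, \sum_(y : L) ptrace2 (G (x, y) rho) = I x rho).

End QDefs.

(* If the instrument I' measures A without disturbing J, then running I' and then J
   is a joint instrument whose J-marginal is J o Phi^{I'} = J and whose A-marginal is
   tr (J-channel o I'_x) = tr I'_x = tr (A(x) .), so A and J are compatible.  A joint
   instrument G for A and J is turned into one for A and Phi^J by coarse-graining over
   the outcomes of J, and into one for A and A^J by following G with the trace, a
   channel; both operations preserve instruments. *)
From HB Require Import structures.
From mathcomp Require Import all_boot all_order all_algebra.
Import Order.TTheory GRing.Theory Num.Theory.
Local Open Scope ring_scope.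
Set Implicit Arguments. Unset Strict Implicit.

Lemma mxvec_index_inj (m n : nat) (a a' : 'I_m) (i i' : 'I_n) :
  mxvec_index a i = mxvec_index a' i' -> (a, i) = (a', i').
Proof. by move/cast_ord_inj/enum_rank_inj. Qed.

Lemma eq_mxvec_index (m n : nat) (a a' : 'I_m) (i i' : 'I_n) :
  (mxvec_index a i == mxvec_index a' i') = (a == a') && (i == i').
Proof. by rewrite -xpair_eqE; apply/eqP/eqP => [/mxvec_index_inj | [-> ->]]. Qed.

Lemma big_mxvec_index (V : nmodType) (m n : nat) (F : 'I_(m * n) -> V) :
  \sum_r F r = \sum_(a < m) \sum_(i < n) F (mxvec_index a i).
Proof. by rewrite pair_big (reindex _ (curry_mxvec_bij m n)); apply: eq_bigr => -[]. Qed.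

Lemma big_unit (V : nmodType) (F : unit -> V) : \sum_u F u = F tt.
Proof. by rewrite (big_pred1 tt) // => -[]. Qed.

Lemma big_fiber_fst (V : nmodType) (A B : finType) (F : A * B -> V) (x : A)
    (u : unit) :
  \sum_(q | (q.1, tt) == (x, u)) F q = \sum_y F (x, y).
Proof.
case: u; rewrite -(big_pred1_eq +%R x (fun a => \sum_y F (a, y))) pair_big_dep /=.
by apply: eq_big => [[a b] | [a b] _]; rewrite ?xpair_eqE ?andbT.
Qed.

Section QuantumOperations.
Variable C : numClosedFieldType.

Lemma blockmxE k n (B : 'I_k -> 'I_k -> 'M[C]_n) a b i j :
  blockmx B (mxvec_index a i) (mxvec_index b j) = B a b i j.
Proof.
rewrite /blockmx summxE (bigD1 a) //= summxE (bigD1 b) //= summxE (bigD1 i) //=.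
rewrite summxE (bigD1 j) //= 2!mxE !eqxx mulr1 !big1 ?addr0 // => x /negPf ne;
  do ?[rewrite summxE; apply: big1 => ? _];
  by rewrite !mxE !eq_mxvec_index [_ == x]eq_sym ne ?andbF mulr0.
Qed.

Lemma blockmx_sum k n (T : Type) (r : seq T) (P : pred T)
    (F : T -> 'I_k -> 'I_k -> 'M[C]_n) :
  blockmx (fun a b => \sum_(t <- r | P t) F t a b)
  = \sum_(t <- r | P t) blockmx (F t).
Proof.
apply/matrixP => r1 r2; case/mxvec_indexP: r1 => a i; case/mxvec_indexP: r2 => b j.
by rewrite blockmxE !summxE; apply: eq_bigr => t _; rewrite blockmxE.
Qed.

Lemma adjmx_mul k l q (A : 'M[C]_(k, l)) (B : 'M[C]_(l, q)) :
  adjmx (A *m B) = adjmx B *m adjmx A.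
Proof. by rewrite /adjmx map_mxM trmx_mul. Qed.

Lemma adjmx_mulmxE N (u v : 'cV[C]_N) (X : 'M[C]_N) :
  (adjmx u *m X *m v) 0 0 = \sum_i \sum_j (u i 0)^* * X i j * v j 0.
Proof.
rewrite mxE; under eq_bigr => j _ do rewrite mxE big_distrl /=.
by rewrite exchange_big; apply: eq_bigr => i _; apply: eq_bigr => j _; rewrite !mxE.
Qed.

Lemma adjmx_delta_mulmx N (X : 'M[C]_N) l :
  adjmx (delta_mx l 0 : 'cV[C]_N) *m X *m delta_mx l 0 = (X l l)%:M.
Proof.
apply/matrixP => i j; rewrite !ord1 [RHS]mxE /adjmx map_delta_mx trmx_delta.
by rewrite -rowE -colE !mxE.
Qed.

Lemma psd0 N : psd (0 : 'M[C]_N).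
Proof. by move=> v; rewrite mulmx0 mul0mx mxE. Qed.

Lemma psdD N (X Y : 'M[C]_N) : psd X -> psd Y -> psd (X + Y).
Proof. by move=> pX pY v; rewrite mulmxDr mulmxDl mxE addr_ge0. Qed.

Lemma psd_mxtrace_ge0 N (X : 'M[C]_N) : psd X -> 0 <= \tr X.
Proof.
move=> pX; apply: sumr_ge0 => l _.
by have := pX (delta_mx l 0); rewrite adjmx_delta_mulmx mxE mulr1n.
Qed.

Definition block_qform k n (B : 'I_k -> 'I_k -> 'M[C]_n) (w : 'I_k -> 'cV[C]_n) :=
  \sum_a \sum_b (adjmx (w a) *m B a b *m w b) 0 0.

Lemma eq_block_qform k n (B : 'I_k -> 'I_k -> 'M[C]_n)
    (w w' : 'I_k -> 'cV[C]_n) :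
  (forall a, w a = w' a) -> block_qform B w = block_qform B w'.
Proof. by move=> ww'; apply: eq_bigr => a _; apply: eq_bigr => b _; rewrite !ww'. Qed.

Lemma adjmx_blockmx_mulmxE k n (B : 'I_k -> 'I_k -> 'M[C]_n)
    (u v : 'cV[C]_(k * n)) :
  (adjmx u *m blockmx B *m v) 0 0
  = \sum_a \sum_b (adjmx (\col_i u (mxvec_index a i) 0) *m B a b
                     *m \col_j v (mxvec_index b j) 0) 0 0.
Proof.
rewrite adjmx_mulmxE big_mxvec_index; apply: eq_bigr => a _.
under eq_bigr => i _ do rewrite big_mxvec_index.
rewrite exchange_big; apply: eq_bigr => b _; rewrite adjmx_mulmxE.
by apply: eq_bigr => i _; apply: eq_bigr => j _; rewrite blockmxE !mxE.
Qed.

Lemma psd_blockmxP k n (B : 'I_k -> 'I_k -> 'M[C]_n) :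
  psd (blockmx B) <-> forall w, 0 <= block_qform B w.
Proof.
split=> [pB w | pw v]; last by rewrite adjmx_blockmx_mulmxE; apply: pw.
have := pB (mxvec (\matrix_(a, i) w a i 0))^T; rewrite adjmx_blockmx_mulmxE.
congr (0 <= _); apply: eq_block_qform => a.
by apply/colP => i; rewrite !mxE mxvecE mxE.
Qed.

Lemma psd_blockmx1 n (X : 'M[C]_n) : psd (blockmx (fun _ _ : 'I_1 => X)) <-> psd X.
Proof.
split=> [/psd_blockmxP pX v | pX].
  by have := pX (fun _ => v); rewrite /block_qform !big_ord1.
by apply/psd_blockmxP => w; rewrite /block_qform !big_ord1.
Qed.

Lemma cp_psd n m (f : 'M[C]_n -> 'M[C]_m) (X : 'M[C]_n) :
  completely_positive f -> psd X -> psd (f X).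
Proof. by move=> cpf /psd_blockmx1 /cpf /psd_blockmx1. Qed.

Lemma cp_comp n m q (f : 'M[C]_n -> 'M[C]_m) (g : 'M[C]_m -> 'M[C]_q) :
  completely_positive f -> completely_positive g ->
  completely_positive (fun X => g (f X)).
Proof. by move=> cpf cpg k B /cpf /cpg. Qed.

Lemma cp_sum n m (T : Type) (r : seq T) (P : pred T)
    (f : T -> 'M[C]_n -> 'M[C]_m) :
  (forall t, completely_positive (f t)) ->
  completely_positive (fun X => \sum_(t <- r | P t) f t X).
Proof.
move=> cpf k B pB; rewrite blockmx_sum.
by apply: big_ind => //; [exact: psd0 | exact: psdD | move=> t _; exact: cpf].
Qed.

Lemma cp_sandwich n m (V : 'M[C]_(n, m)) :
  completely_positive (fun X => adjmx V *m X *m V).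
Proof.
move=> k B /psd_blockmxP pB; apply/psd_blockmxP => w.
have := pB (fun a => V *m w a); congr (0 <= _).
by apply: eq_bigr => a _; apply: eq_bigr => b _; rewrite adjmx_mul !mulmxA.
Qed.

Lemma is_linear_sum n m (f : 'M[C]_n -> 'M[C]_m) : is_linear f ->
  forall (T : Type) (r : seq T) (P : pred T) (F : T -> 'M[C]_n),
  f (\sum_(t <- r | P t) F t) = \sum_(t <- r | P t) f (F t).
Proof.
move=> linf T r P F.
have fD : {morph f : X Y / X + Y} by move=> X Y; rewrite -[X]scale1r linf !scale1r.
have f0 : f 0 = 0 by apply: (@addrI _ (f 0)); rewrite -fD !addr0.
exact: (big_morph f fD f0).
Qed.

Lemma is_linear_comp n m q (f : 'M[C]_n -> 'M[C]_m) (g : 'M[C]_m -> 'M[C]_q) :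
  is_linear f -> is_linear g -> is_linear (fun X => g (f X)).
Proof. by move=> linf ling a X Y; rewrite linf ling. Qed.

Lemma is_linear_sumf n m (T : Type) (r : seq T) (P : pred T)
    (f : T -> 'M[C]_n -> 'M[C]_m) :
  (forall t, is_linear (f t)) -> is_linear (fun X => \sum_(t <- r | P t) f t X).
Proof.
move=> linf a X Y; under eq_bigr => t _ do rewrite linf.
by rewrite big_split /= scaler_sumr.
Qed.

Lemma is_linear_ptrace1 m p : is_linear (@ptrace1 C m p).
Proof.
move=> a X Y; apply/matrixP => b b'; rewrite !mxE mulr_sumr -big_split.
by apply: eq_bigr => i _; rewrite !mxE.
Qed.

Lemma is_linear_ptrace2 m p : is_linear (@ptrace2 C m p).
Proof.
move=> a X Y; apply/matrixP => b b'; rewrite !mxE mulr_sumr -big_split.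
by apply: eq_bigr => i _; rewrite !mxE.
Qed.

Lemma mxtrace_ptrace1 m p (X : 'M[C]_(m * p)) : \tr (ptrace1 X) = \tr X.
Proof. by rewrite [RHS]big_mxvec_index exchange_big; apply: eq_bigr => b _; rewrite mxE. Qed.

Lemma mxtrace_ptrace2 m p (X : 'M[C]_(m * p)) : \tr (ptrace2 X) = \tr X.
Proof. by rewrite [RHS]big_mxvec_index; apply: eq_bigr => a _; rewrite mxE. Qed.

Definition trace1 n (X : 'M[C]_n) : 'M[C]_1 := (\tr X)%:M.

Lemma trace1_mx1 (Y : 'M[C]_1) : trace1 Y = Y.
Proof. by rewrite /trace1 [RHS]mx11_scalar /mxtrace big_ord1. Qed.

Lemma is_linear_trace1 n : is_linear (@trace1 n).
Proof. by move=> a X Y; rewrite /trace1 mxtraceD mxtraceZ raddfD /= scale_scalar_mx. Qed.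

Lemma cp_trace1 n : completely_positive (@trace1 n).
Proof.
pose e l : 'cV[C]_n := delta_mx l 0.
have trace1E X : trace1 X = \sum_l adjmx (e l) *m X *m e l.
  rewrite /trace1 /mxtrace (raddf_sum (@scalar_mx C 1)).
  by apply: eq_bigr => l _; rewrite adjmx_delta_mulmx.
move=> k B /(@cp_sum _ _ _ (index_enum 'I_n) xpredT _ (fun l => cp_sandwich (e l))).
by congr psd; apply: eq_bigr => a _; apply: eq_bigr => b _; rewrite trace1E.
Qed.

Lemma trace_preserving_trace1 n : trace_preserving (@trace1 n).
Proof. by move=> X; rewrite /trace1 mxtrace_scalar. Qed.

(* [1 (x) Y], i.e. [Y] seen as an operator on [C^1 (x) C^p]. *)
Definition tens1mx p (Y : 'M[C]_p) : 'M[C]_(1 * p) := blockmx (fun _ _ : 'I_1 => Y).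

Lemma ptrace1_tens1mx p (Y : 'M[C]_p) : ptrace1 (tens1mx Y) = Y.
Proof. by apply/matrixP => i j; rewrite mxE big_ord1 blockmxE. Qed.

Lemma ptrace2_tens1mx p (Y : 'M[C]_p) : ptrace2 (tens1mx Y) = trace1 Y.
Proof.
apply/matrixP => a a'; rewrite !ord1 !mxE mulr1n.
by apply: eq_bigr => i _; rewrite blockmxE.
Qed.

Lemma is_linear_tens1mx p : is_linear (@tens1mx p).
Proof.
move=> a X Y; apply/matrixP => r s.
by case/mxvec_indexP: r => ? i; case/mxvec_indexP: s => ? j; rewrite !mxE !blockmxE !mxE.
Qed.

Lemma cp_tens1mx p : completely_positive (@tens1mx p).
Proof.
move=> k B /psd_blockmxP pB; apply/psd_blockmxP => w.
have := pB (fun a => \col_i w a (mxvec_index ord0 i) 0); congr (0 <= _).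
apply: eq_bigr => a _; apply: eq_bigr => b _.
by rewrite adjmx_blockmx_mulmxE !big_ord1.
Qed.

Lemma trace_preserving_tens1mx p : trace_preserving (@tens1mx p).
Proof. by move=> Y; rewrite -mxtrace_ptrace1 ptrace1_tens1mx. Qed.

Definition channel n m (f : 'M[C]_n -> 'M[C]_m) :=
  [/\ is_linear f, completely_positive f & trace_preserving f].

Lemma channel_trace1 n : channel (@trace1 n).
Proof.
by split; [exact: is_linear_trace1 | exact: cp_trace1 | exact: trace_preserving_trace1].
Qed.

Lemma channel_tens1mx p : channel (@tens1mx p).
Proof.
by split; [exact: is_linear_tens1mx | exact: cp_tens1mx | exact: trace_preserving_tens1mx].
Qed.

Lemma instrument_channel_comp (O : finType) n m q
    (I : O -> 'M[C]_n -> 'M[C]_m) (f : 'M[C]_m -> 'M[C]_q) :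
  channel f -> instrument I -> instrument (fun x X => f (I x X)).
Proof.
case=> linf cpf tpf [linI [cpI [tniI tpI]]]; split; [|split; [|split]].
- by move=> x; apply: is_linear_comp.
- by move=> x; apply: cp_comp.
- by move=> x rho prho; rewrite tpf; apply: tniI.
- move=> X; rewrite -tpI /induced_channel !raddf_sum.
  by apply: eq_bigr => x _; apply: tpf.
Qed.

Lemma instrument_seq (O L : finType) n m p
    (I : O -> 'M[C]_n -> 'M[C]_m) (J : L -> 'M[C]_m -> 'M[C]_p) :
  instrument I -> instrument J -> instrument (fun q X => J q.2 (I q.1 X)).
Proof.
move=> [linI [cpI [tniI tpI]]] [linJ [cpJ [tniJ tpJ]]]; split; [|split; [|split]].
- by move=> q; apply: is_linear_comp.
- by move=> q; apply: cp_comp.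
- move=> [x y] rho prho /=.
  exact: le_trans (tniJ y _ (cp_psd (cpI x) prho)) (tniI x _ prho).
- move=> X; rewrite -tpI /induced_channel !raddf_sum.
  rewrite -(pair_bigA _ (fun x y => \tr (J y (I x X)))).
  by apply: eq_bigr => x _; have := tpJ (I x X); rewrite /induced_channel raddf_sum.
Qed.

Lemma instrument_coarse (O O' : finType) n m (I : O -> 'M[C]_n -> 'M[C]_m)
    (g : O -> O') :
  instrument I -> instrument (fun x' X => \sum_(x | g x == x') I x X).
Proof.
move=> [linI [cpI [tniI tpI]]]; split; [|split; [|split]].
- by move=> x'; apply: is_linear_sumf.
- by move=> x'; apply: cp_sum.
- move=> x' rho prho; rewrite -tpI /induced_channel !raddf_sum.
  rewrite [X in _ <= X](bigID (fun x => g x == x')) /= lerDl.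
  by apply: sumr_ge0 => x _; apply/psd_mxtrace_ge0/cp_psd.
- by move=> X; rewrite -tpI /induced_channel (partition_big g xpredT) //= raddf_sum.
Qed.

Lemma povm_nondisturb_compatible (O L : finType) n p (A : O -> 'M[C]_n)
    (J : L -> 'M[C]_n -> 'M[C]_p) :
  instrument J -> povm_nondisturb A J -> compatible (povm_ins A) J.
Proof.
move=> insJ [I' [insI' indI' ndI']]; have [linJ [_ [_ tpJ]]] := insJ.
exists (fun q X => tens1mx (J q.2 (I' q.1 X))); split.
  exact: instrument_channel_comp (channel_tens1mx _) (instrument_seq insI' insJ).
move=> rho srho; split=> [y | x].
  under eq_bigr do rewrite ptrace1_tens1mx.
  by rewrite -(is_linear_sum (linJ y)) ndI'.
under eq_bigr do rewrite ptrace2_tens1mx.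
rewrite -(is_linear_sum (@is_linear_trace1 _)) /trace1 (tpJ (I' x rho)).
by rewrite /povm_ins indI'.
Qed.

Lemma compatible_induced_channel (O L : finType) n m p (I : O -> 'M[C]_n -> 'M[C]_m)
    (J : L -> 'M[C]_n -> 'M[C]_p) :
  compatible I J -> compatible I (chan_ins (induced_channel J)).
Proof.
move=> [G [insG margG]].
exists (fun xu X => \sum_(q | (q.1, tt) == xu) G q X); split.
  exact: instrument_coarse.
move=> rho srho; have [margJ margI] := margG rho srho; split=> [u | x].
  under eq_bigr do rewrite big_fiber_fst (is_linear_sum (@is_linear_ptrace1 _ _)).
  by rewrite exchange_big; apply: eq_bigr => y _; apply: margJ.
by rewrite big_unit big_fiber_fst (is_linear_sum (@is_linear_ptrace2 _ _)) margI.
Qed.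

Lemma compatible_povm_ins (O L : finType) n p (I : O -> 'M[C]_n -> 'M[C]_1)
    (J : L -> 'M[C]_n -> 'M[C]_p) (A : L -> 'M[C]_n) :
  induces_povm J A -> compatible I J -> compatible I (povm_ins A).
Proof.
move=> indJ [G [insG margG]].
exists (fun q X => tens1mx (trace1 (G q X))); split.
  apply: (instrument_channel_comp (channel_tens1mx _)).
  exact: instrument_channel_comp (channel_trace1 _) insG.
move=> rho srho; have [margJ margI] := margG rho srho; split=> [y | x].
  under eq_bigr do rewrite ptrace1_tens1mx.
  rewrite /povm_ins indJ // -margJ -/(trace1 _) (is_linear_sum (@is_linear_trace1 _)).
  by apply: eq_bigr => x _; rewrite /trace1 mxtrace_ptrace1.
under eq_bigr do rewrite ptrace2_tens1mx trace1_mx1.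
rewrite -[RHS]trace1_mx1 -margI (is_linear_sum (@is_linear_trace1 _)).
by apply: eq_bigr => y _; rewrite /trace1 mxtrace_ptrace2.
Qed.

End QuantumOperations.

Theorem corollary2 (C : numClosedFieldType) (Omega Lambda : finType) (n p : nat)
  (I : Omega -> 'M[C]_n -> 'M[C]_n) (J : Lambda -> 'M[C]_n -> 'M[C]_p)
  (AI : Omega -> 'M[C]_n) (AJ : Lambda -> 'M[C]_n) :
  instrument I -> instrument J ->
  induces_povm I AI -> induces_povm J AJ ->
  [/\ ins_nondisturb I J -> povm_nondisturb AI J,
      povm_nondisturb AI J -> compatible (povm_ins AI) J &
      compatible (povm_ins AI) J ->
        compatible (povm_ins AI) (chan_ins (induced_channel J)) /\
        compatible (povm_ins AI) (povm_ins AJ)].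
Proof.
move=> insI insJ indI indJ; split.
- by move=> ndI; exists I; split.
- exact: povm_nondisturb_compatible.
- move=> compAJ; split; first exact: compatible_induced_channel.
  exact: compatible_povm_ins indJ compAJ.
Qed.
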